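(* Let $q$ be a prime power and $4\le h\le k$ integers. Let $1\le s\le h$, let $i_1,\ldots,i_s$ be distinct indices in $\{1,\ldots,h\}$ and $a_{i_1},\ldots,a_{i_s}\in\mathbb{F}_q^*$. Suppose the coefficients $a_{i_1},\ldots,a_{i_s}$ take exactly $l\ge 1$ distinct values, taken $r_1,\ldots,r_l\ge 1$ times respectively (so $r_1+\cdots+r_l=s$). Let $\Lambda$ be the number of $(x_1,\ldots,x_k)\in\mathbb{F}_q^k$ satisfying $$a_{i_1}x_{i_1}+\cdots+a_{i_s}x_{i_s}=0\quad\text{and}\quad (x_1+\cdots+x_h)\,x_1x_2\cdots x_h=0.$$ Then $$\Lambda=q^{k-1}-(q-1)^{h-s}q^{k-h}\psi_{s}+q^{k-h}A_{r_1,\ldots,r_l,h-s}.$$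
   Context: For $m\ge 0$, $\psi_m$ is the number of $(x_1,\ldots,x_m)\in\mathbb{F}_q^m$ with $\sum x_i=0$ and all $x_i\ne0$; $\varphi_m$ is the number of such tuples with $\sum x_i=1$ and all $x_i\ne 0$ ($\psi_0=1$, $\varphi_0=0$). For positive integers $r_1,\ldots,r_m$ define recursively $A_{r_1}=\psi_{r_1}$ and $A_{r_1,\ldots,r_m}=\psi_{r_1+\cdots+r_{m-1}}\varphi_{r_m}+(-1)^{r_m}A_{r_1,\ldots,r_{m-1}}$ for $m\ge 2$; moreover, for positive $r_1,\ldots,r_l$, the symbol $A_{r_1,\ldots,r_l,0}$ denotes $A_{r_1,\ldots,r_l}$. *)

From HB Require Import structures.
From mathcomp Require Import all_boot all_order all_algebra all_field.
Set Implicit Arguments. Unset Strict Implicit. Unset Printing Implicit Defensive.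
Import Order.TTheory GRing.Theory Num.Theory.

Local Open Scope ring_scope.

Definition psi (F : finFieldType) (m : nat) : nat :=
  #|[set x : {ffun 'I_m -> F} | (\sum_(i < m) x i == 0) && [forall i, x i != 0]]|.

Definition phi (F : finFieldType) (m : nat) : nat :=
  #|[set x : {ffun 'I_m -> F} | (\sum_(i < m) x i == 1) && [forall i, x i != 0]]|.

(* A on the reversed list: Arev [:: r_m; r_{m-1}; ...; r_1] = A_{r_1,...,r_m}. *)
Fixpoint Arev (F : finFieldType) (s : seq nat) : int :=
  match s with
  | [::] => 0
  | [:: r] => (psi F r)%:Z
  | r :: t => (psi F (sumn t))%:Z * (phi F r)%:Z + (-1) ^+ r * Arev F t
  end.

Definition A (F : finFieldType) (rs : seq nat) : int := Arev F (rev rs).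

Definition A0 (F : finFieldType) (rs : seq nat) (e : nat) : int :=
  A F (rs ++ (if e == 0%N then [::] else [:: e])).

From HB Require Import structures.
From mathcomp Require Import all_boot all_order all_algebra all_field.
From mathcomp Require Import zify.
Set Implicit Arguments. Unset Strict Implicit. Unset Printing Implicit Defensive.
Import Order.TTheory GRing.Theory Num.Theory.

(* Write L(x) = a_{i_1} x_{i_1} + ... + a_{i_s} x_{i_s} and S(x) = x_1 + ... + x_h.
   The nonzero form L has q^(k-1) zeros.  A zero with S(x) x_1 ... x_h <> 0 is an
   arbitrary choice of x_(h+1), ..., x_k together with a nowhere-zero y in F^h such
   that L(y) = 0 and S(y) <> 0.  The nowhere-zero zeros of L number
   (q-1)^(h-s) psi_s, so it remains to see that the number N of nowhere-zero common
   zeros of L and S is A_{r_1,...,r_l,h-s}.  Group the coordinates by the value v of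
   their coefficient in L (v = 0 for the h - s coordinates not among the i_j).
   Replacing L by L - v S removes the class of v from the equation L = 0; summing
   over that class with the other coordinates fixed then counts vectors of a
   prescribed sum, which gives psi or phi of the class size according as the other
   coordinates sum to zero or not.  Since psi_n - phi_n = (-1)^n, N satisfies the
   recursion that defines A. *)

Lemma card_in_sum (U : finType) (pT : predType U) (A : pT) (P : pred U) :
  #|[set x in A | P x]| = \sum_(x in A) P x.
Proof.
rewrite -sum1_card [LHS]big_mkcond [RHS]big_mkcond /=; apply: eq_bigr => x _.
by rewrite !inE; case: (x \in A); case: (P x).
Qed.

Lemma card_set_sum (U : finType) (P : pred U) : #|[set x | P x]| = \sum_x P x.
Proof. by rewrite -sum1dep_card big_mkcond; apply: eq_bigr => x _; case: (P x). Qed.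

Lemma card_sep (T : finType) (D : {set T}) (P : pred T) :
  #|[set t in D | P t]| + #|[set t in D | ~~ P t]| = #|D|.
Proof.
by rewrite -(cardsID [set t | P t] D); congr (_ + _); apply: eq_card => t; rewrite !inE andbC.
Qed.

Lemma sumn_card_fibres (T : finType) (U : eqType) (D : {set T}) (c : T -> U)
    (vs : seq U) : uniq vs -> {in D, forall t, c t \in vs} ->
  sumn [seq #|[set t in D | c t == v]| | v <- vs] = #|D|.
Proof.
move=> uvs cD; rewrite sumnE big_map -sum1_card.
transitivity (\sum_(v <- vs) \sum_(t in D) (c t == v : nat)).
  by apply: eq_bigr => v _; rewrite card_in_sum.
rewrite exchange_big /=; apply: eq_bigr => t tD.
rewrite (eq_bigr (fun v => if v == c t then 1 else 0)) => [|v _]; last first.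
  by rewrite eq_sym; case: eqP.
by rewrite -big_mkcond sum1_count count_uniq_mem // cD.
Qed.

Section Counting.
Variable F : finFieldType.
(* Vectors vanishing off [D]; [nzvec_on D] holds those whose support is exactly [D]. *)
Local Notation vec_on D := (pffun_on 0%R D (predT : {pred F})).
Local Notation nzvec_on D := (pffun_on 0%R D (predC1 0%R : {pred F})).

(** * Vectors with prescribed support *)

Section SupportedVectors.
Variable T : finType.
Implicit Types (t : T) (D : {set T}) (R : {pred F}) (x y z : {ffun T -> F}).

Lemma pffun_on0P D R x :
  reflect (forall t, if t \in D then x t \in R else x t == 0%R) (x \in pffun_on 0%R D R).
Proof. by apply: (iffP familyP) => Hx t; have /= := Hx t; case: (t \in D). Qed.

Lemma pffun_on0_out D R x t : x \in pffun_on 0%R D R -> t \notin D -> x t = 0%R.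
Proof. by move=> /pffun_on0P /(_ t); case: (t \in D) => // /eqP. Qed.

Definition restr D x : {ffun T -> F} := [ffun t => if t \in D then x t else 0%R].

Lemma restr_pffun_on D R x :
  (restr D x \in pffun_on 0%R D R) = [forall t in D, x t \in R].
Proof.
apply/pffun_on0P/forall_inP => Hx t.
  by move=> tD; have := Hx t; rewrite ffunE tD.
by rewrite ffunE; case: (boolP (t \in D)) => // /Hx.
Qed.

Lemma restr_id D R x : x \in pffun_on 0%R D R -> restr D x = x.
Proof.
by move=> Hx; apply/ffunP => t; rewrite ffunE; case: ifPn => // /(pffun_on0_out Hx).
Qed.

Lemma pffun_on0E D R x :
  (x \in pffun_on 0%R D R) = [forall t in D, x t \in R] && (restr D x == x).
Proof.
apply/idP/andP => [Hx | [HR /eqP <-]]; last by rewrite restr_pffun_on.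
by rewrite -restr_pffun_on (restr_id Hx) Hx eqxx.
Qed.

Lemma restrD D : {morph restr D : x y / (x + y)%R}.
Proof. by move=> x y; apply/ffunP => t; rewrite !ffunE; case: ifP; rewrite ?addr0. Qed.

Lemma restr_disjoint D1 D2 R x :
  [disjoint D1 & D2] -> x \in pffun_on 0%R D2 R -> restr D1 x = 0%R.
Proof.
move=> dis Hx; apply/ffunP => t; rewrite !ffunE; case: ifP => // t1.
by rewrite (pffun_on0_out Hx) // (disjointFr dis t1).
Qed.

Lemma restr_setU D1 D2 x :
  [disjoint D1 & D2] -> (restr D1 x + restr D2 x)%R = restr (D1 :|: D2) x.
Proof.
move=> dis; apply/ffunP => t; rewrite !ffunE inE.
by case: ifPn => [t1 | _]; rewrite ?(disjointFr dis t1) ?addr0 ?add0r.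
Qed.

Lemma big_pffun_on_setU D1 D2 R (f : {ffun T -> F} -> nat) : [disjoint D1 & D2] ->
  \sum_(x in pffun_on 0%R (D1 :|: D2) R) f x =
  \sum_(y in pffun_on 0%R D1 R) \sum_(z in pffun_on 0%R D2 R) f (y + z)%R.
Proof.
move=> dis; have dis' : [disjoint D2 & D1] by rewrite disjoint_sym.
pose add (p : {ffun T -> F} * {ffun T -> F}) := (p.1 + p.2)%R.
rewrite pair_big_dep (reindex_onto (fun x => (restr D1 x, restr D2 x)) add) /=; last first.
  move=> [y z] /andP[/= y1 z2]; rewrite /add /= !restrD (restr_id y1) (restr_id z2).
  by rewrite (restr_disjoint dis z2) (restr_disjoint dis' y1) addr0 add0r.
apply: eq_big => [x | x Hx]; last by rewrite /add /= restr_setU // (restr_id Hx).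
rewrite /add /= !restr_pffun_on restr_setU // pffun_on0E; congr andb.
apply/forall_inP/andP => [H | [/forall_inP H1 /forall_inP H2] t].
  by split; apply/forall_inP => t tD; apply: H; rewrite inE tD ?orbT.
by rewrite inE => /orP[/H1 | /H2].
Qed.

Lemma sum_pffun_on D R x (g : T -> F -> F) : (forall t, g t 0 = 0)%R ->
  x \in pffun_on 0%R D R -> (\sum_t g t (x t) = \sum_(t in D) g t (x t))%R.
Proof.
move=> g0 Hx; rewrite [LHS](bigID (mem D)) /= [X in (_ + X)%R]big1 ?addr0 // => t tD.
by rewrite (pffun_on0_out Hx tD).
Qed.

Lemma big_pffun_on_set1 t R (g : F -> nat) :
  \sum_(z in pffun_on 0%R [set t] R) g (z t) = \sum_(a in R) g a.
Proof.
pose single a : {ffun T -> F} := [ffun u => if u == t then a else 0%R].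
have singleE a : single a t = a by rewrite ffunE eqxx.
rewrite (reindex single) /=; last first.
  exists (fun z => z t) => [a _ | z Hz]; first exact: singleE.
  apply/ffunP => u; rewrite ffunE; case: eqP => [-> // | /eqP ut].
  by rewrite (pffun_on0_out Hz) // inE.
apply: eq_big => [a | a _]; last by rewrite singleE.
apply/pffun_on0P/idP => [/(_ t) | Ha u]; rewrite !ffunE inE; first by rewrite eqxx.
by case: eqP.
Qed.

Lemma card_nzvec_on D : #|nzvec_on D| = #|F|.-1 ^ #|D|.
Proof. by rewrite card_pffun_on cardC1. Qed.

Lemma nzvec_on_prod D y :
  y \in vec_on D -> (y \in nzvec_on D) = (\prod_(t in D) y t != 0)%R.
Proof.
move=> Hy; apply/pffun_on0P/prodf_neq0 => [H t tD | H t]; first by have := H t; rewrite tD.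
by case: ifPn => [/H // | tD]; rewrite (pffun_on0_out Hy tD).
Qed.

Lemma sum_ffun_dep_on D (f : {ffun T -> F} -> nat) :
  (forall y z, z \in vec_on (~: D) -> f (y + z)%R = f y) ->
  \sum_x f x = #|F| ^ #|~: D| * \sum_(y in vec_on D) f y.
Proof.
move=> fD; rewrite (eq_bigl (fun x => x \in vec_on (D :|: ~: D))); last first.
  by move=> x; rewrite setUCr; apply/esym/pffun_on0P => t; rewrite in_setT.
have dis : [disjoint D & ~: D] by rewrite disjoints_subset setCK.
rewrite (big_pffun_on_setU _ _ dis) big_distrr; apply: eq_bigr => y _.
have card_predT : #|(predT : {pred F})| = #|F| by [].
rewrite (eq_bigr (fun=> f y)) => [|z Hz]; last exact: fD.
by rewrite sum_nat_const card_pffun_on card_predT.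
Qed.

Lemma sum_ffunD x y : (\sum_t (x + y) t = \sum_t x t + \sum_t y t)%R.
Proof. by rewrite -big_split; apply: eq_bigr => t _; rewrite ffunE. Qed.

Lemma sum_mul_ffunD (c : T -> F) x y :
  (\sum_t c t * (x + y) t = \sum_t c t * x t + \sum_t c t * y t)%R.
Proof. by rewrite -big_split; apply: eq_bigr => t _; rewrite ffunE mulrDr. Qed.

Lemma sum_eq_bij (f : F -> F) w : bijective f -> \sum_a (f a == w : nat) = 1.
Proof.
case=> g fK gK; rewrite (bigD1 (g w)) //= gK eqxx big1 // => a ne.
by case: eqP => // fa; rewrite -fa fK eqxx in ne.
Qed.

Definition nzsum_count D w := #|[set x in nzvec_on D | (\sum_t x t == w)%R]|.

Lemma nzsum_count_rec D t w :
  t \in D -> nzsum_count D w + nzsum_count (D :\ t) w = #|F|.-1 ^ #|D :\ t|.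
Proof.
move=> tD; have dis : [disjoint [set t] & D :\ t] by rewrite disjoints1 setD11.
rewrite /nzsum_count 2!card_in_sum -{1}(setD1K tD) big_pffun_on_setU // exchange_big /=.
rewrite -card_nzvec_on -sum1_card -big_split /=; apply: eq_bigr => y Hy.
pose S := (\sum_u y u)%R.
have shift_bij : bijective (fun a => a + S)%R.
  by exists (fun a => a - S)%R => a; rewrite ?addrK ?subrK.
rewrite -(sum_eq_bij w shift_bij) [RHS](bigD1 0%R) //= add0r addnC; congr (_ + _).
rewrite -[RHS](big_pffun_on_set1 t (predC1 0%R) (fun a => ((a + S)%R == w : nat))).
apply: eq_bigr => z Hz.
by rewrite sum_ffunD (sum_pffun_on (g := fun _ a => a) _ Hz) // big_set1.
Qed.

Lemma sum_scale D (c : T -> F) (f : F -> nat) : {in D, forall t, c t != 0%R} ->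
  \sum_(x in nzvec_on D) f (\sum_t c t * x t)%R = \sum_(x in nzvec_on D) f (\sum_t x t)%R.
Proof.
move=> cD; pose c' t := if t \in D then c t else 1%R.
have c'_nz t : c' t != 0%R by rewrite /c'; case: ifPn => [/cD | _]; rewrite ?oner_eq0.
pose scale (d : T -> F) x : {ffun T -> F} := [ffun t => d t * x t]%R.
rewrite [RHS](reindex (scale c')) /=; last first.
  exists (scale (fun t => (c' t)^-1)%R) => x _; apply/ffunP => t.
    by rewrite !ffunE mulrA mulVf ?mul1r.
  by rewrite !ffunE mulrA mulfV ?mul1r.
apply: eq_big => [x | x Hx].
  apply/pffun_on0P/pffun_on0P => Hx t; have := Hx t; rewrite !ffunE !inE mulf_eq0;
    by rewrite (negbTE (c'_nz t)).
congr f; under [RHS]eq_bigr do rewrite ffunE.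
rewrite (sum_pffun_on (g := fun t a => c t * a)%R (fun t => mulr0 _) Hx).
rewrite (sum_pffun_on (g := fun t a => c' t * a)%R (fun t => mulr0 _) Hx).
by apply: eq_bigr => t tD; rewrite /c' tD.
Qed.

Lemma card_hyperplane (c : T -> F) t0 w : c t0 != 0%R ->
  \sum_(x : {ffun T -> F}) ((\sum_t c t * x t)%R == w : nat) = #|F| ^ #|T|.-1.
Proof.
move=> ct0; have dis : [disjoint [set t0] & [set: T] :\ t0] by rewrite disjoints1 setD11.
rewrite (eq_bigl (fun x => x \in vec_on [set: T])); last first.
  by move=> x; apply/esym/pffun_on0P => t; rewrite in_setT.
rewrite -(setD1K (in_setT t0)) (big_pffun_on_setU _ _ dis) exchange_big /=.
have card_predT : #|(predT : {pred F})| = #|F| by [].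
rewrite -[#|T|]cardsT (cardsD1 t0) in_setT /= -card_predT.
rewrite -(card_pffun_on 0%R) -sum1_card; apply: eq_bigr => y _.
pose S := (\sum_t c t * y t)%R.
have affine_bij : bijective (fun a => c t0 * a + S)%R.
  exists (fun a => (a - S) / c t0)%R => a; rewrite ?addrK.
    by rewrite mulrC mulKf.
  by rewrite mulrC divfK ?subrK.
rewrite -(sum_eq_bij w affine_bij).
rewrite -(big_pffun_on_set1 t0 predT (fun a => ((c t0 * a + S)%R == w : nat))).
apply: eq_bigr => z Hz; rewrite sum_mul_ffunD.
by rewrite (sum_pffun_on (g := fun t a => c t * a)%R (fun t => mulr0 _) Hz) big_set1.
Qed.

Lemma nzvec_onT x : (x \in nzvec_on [set: T]) = [forall t, x t != 0%R].
Proof. by apply/pffun_on0P/forallP => Hx t; have := Hx t; rewrite in_setT. Qed.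

Lemma nzsum_count_set0 w : nzsum_count set0 w = (0%R == w : nat).
Proof.
rewrite /nzsum_count card_in_sum (big_pred1 (0%R : {ffun T -> F})) => [|x].
  by rewrite big1 // => t; rewrite ffunE.
apply/pffun_on0P/eqP => [Hx | -> t]; last by rewrite ffunE inE.
by apply/ffunP => t; have := Hx t; rewrite inE ffunE => /eqP.
Qed.

Lemma nzsum_count_scale D w : w != 0%R -> nzsum_count D w = nzsum_count D 1%R.
Proof.
move=> w0; rewrite /nzsum_count !card_in_sum.
rewrite -(sum_scale (c := fun _ => w^-1)%R (fun a => (a == 1%R : nat))).
  apply: eq_bigr => x _; rewrite -mulr_sumr mulrC -(divff w0).
  by rewrite (inj_eq (mulIf (invr_neq0 w0))).
by move=> t _; rewrite invr_eq0.
Qed.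

End SupportedVectors.

Lemma nzsum_count_eq_card (T1 T2 : finType) (D1 : {set T1}) (D2 : {set T2}) w :
  #|D1| = #|D2| -> nzsum_count D1 w = nzsum_count D2 w.
Proof.
move Dn : #|D1| => n; elim: n D1 D2 Dn => [|n IH] D1 D2 D1n D2n.
  by rewrite (cards0_eq D1n) (cards0_eq (esym D2n)) !nzsum_count_set0.
have [t1 t1D] : {t1 | t1 \in D1} by apply/sigW/card_gt0P; rewrite D1n.
have [t2 t2D] : {t2 | t2 \in D2} by apply/sigW/card_gt0P; rewrite -D2n.
have D1t : #|D1 :\ t1| = n by move: D1n; rewrite (cardsD1 t1) t1D => -[].
have D2t : #|D2 :\ t2| = n by move: D2n; rewrite (cardsD1 t2) t2D => -[].
apply: (@addIn (nzsum_count (D1 :\ t1) w)); rewrite {2}(IH _ (D2 :\ t2) D1t) ?D2t //.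
by rewrite !nzsum_count_rec // D1t D2t.
Qed.

Lemma psi_nzsum_count n : psi F n = nzsum_count [set: 'I_n] 0%R.
Proof. by apply: eq_card => x; rewrite !in_set nzvec_onT andbC. Qed.

Lemma phi_nzsum_count n : phi F n = nzsum_count [set: 'I_n] 1%R.
Proof. by apply: eq_card => x; rewrite !in_set nzvec_onT andbC. Qed.

Lemma nzsum_count_card (T : finType) (D : {set T}) w :
  nzsum_count D w = if w == 0%R then psi F #|D| else phi F #|D|.
Proof.
case: eqP => [-> | /eqP w0]; last rewrite nzsum_count_scale // phi_nzsum_count.
  by rewrite psi_nzsum_count; apply: nzsum_count_eq_card; rewrite cardsT card_ord.
by apply: nzsum_count_eq_card; rewrite cardsT card_ord.
Qed.

Lemma psi0 : psi F 0 = 1.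
Proof.
by have := nzsum_count_card (set0 : {set 'I_0}) 0%R; rewrite nzsum_count_set0 cards0 eqxx.
Qed.

Lemma phi0 : phi F 0 = 0.
Proof.
have := nzsum_count_card (set0 : {set 'I_0}) 1%R.
by rewrite nzsum_count_set0 cards0 oner_eq0 eq_sym oner_eq0.
Qed.

Lemma psi_sub_phi n : ((psi F n)%:Z - (phi F n)%:Z = (-1) ^+ n)%R.
Proof.
elim: n => [|n IH]; first by rewrite psi0 phi0.
have cardD : #|[set: 'I_n.+1] :\ ord_max| = n by rewrite setTD cardsC1 card_ord.
have := nzsum_count_rec 0%R (in_setT (ord_max : 'I_n.+1)).
have := nzsum_count_rec 1%R (in_setT (ord_max : 'I_n.+1)).
rewrite !nzsum_count_card eqxx oner_eq0 cardsT card_ord cardD exprS mulN1r -IH.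
lia.
Qed.

Lemma Arev_cons n ns : ns != [::] ->
  (Arev F (n :: ns) = (psi F (sumn ns))%:Z * (phi F n)%:Z + (-1) ^+ n * Arev F ns)%R.
Proof. by case: ns. Qed.

(** * Nowhere-zero zeros of a linear form *)

Section Kernels.
Variable T : finType.
Implicit Types (t : T) (D : {set T}) (R : {pred F}) (c : T -> F) (y z : {ffun T -> F}).

Lemma sum_mul_pffun_on_eq0 D R c z : {in D, forall t, c t = 0%R} ->
  z \in pffun_on 0%R D R -> (\sum_t c t * z t = 0)%R.
Proof.
move=> cD Hz; rewrite (sum_pffun_on (g := fun t a => c t * a)%R (fun t => mulr0 _) Hz).
by apply: big1 => t /cD ->; rewrite mul0r.
Qed.

Lemma big_pffun_on_sep D R (P : pred T) (f : {ffun T -> F} -> nat) :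
  \sum_(x in pffun_on 0%R D R) f x =
  \sum_(y in pffun_on 0%R [set t in D | P t] R)
     \sum_(z in pffun_on 0%R [set t in D | ~~ P t] R) f (y + z)%R.
Proof.
rewrite -big_pffun_on_setU; last first.
  by rewrite -setI_eq0; apply/eqP/setP => t; rewrite !inE; case: (t \in D); case: (P t).
have -> // : [set t in D | P t] :|: [set t in D | ~~ P t] = D.
by apply/setP => t; rewrite !inE -andb_orr orbN andbT.
Qed.

Definition kernel_count c D := #|[set y in nzvec_on D | (\sum_t c t * y t == 0)%R]|.

Lemma kernel_count_nz D c : {in D, forall t, c t != 0%R} -> kernel_count c D = psi F #|D|.
Proof.
move=> cD; rewrite /kernel_count card_in_sum (sum_scale (fun a => (a == 0%R : nat)) cD).
rewrite -card_in_sum.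
by have := nzsum_count_card D 0%R; rewrite eqxx => <-.
Qed.

Lemma kernel_countE D c :
  kernel_count c D =
  psi F #|[set t in D | c t != 0%R]| * #|F|.-1 ^ #|[set t in D | c t == 0%R]|.
Proof.
have cE : {in [set t in D | c t != 0%R], forall t, c t != 0%R}.
  by move=> t; rewrite inE => /andP[].
rewrite /kernel_count [LHS]card_in_sum (big_pffun_on_sep D _ (fun t => c t != 0%R)).
rewrite -(kernel_count_nz cE) [X in _ = X * _]card_in_sum big_distrl /=; apply: eq_bigr => y _.
have -> : [set t in D | ~~ (c t != 0%R)] = [set t in D | c t == 0%R].
  by apply/setP => t; rewrite !inE negbK.
rewrite mulnC -card_nzvec_on -sum_nat_const; apply: eq_bigr => z Hz.
by rewrite sum_mul_ffunD (sum_mul_pffun_on_eq0 _ Hz) ?addr0 // => t; rewrite inE => /andP[_ /eqP].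
Qed.

Definition joint_kernel_count c D :=
  #|[set y in nzvec_on D | (\sum_t c t * y t == 0)%R && (\sum_t y t == 0)%R]|.

Lemma joint_kernel_count_shift D c v :
  joint_kernel_count (fun t => c t - v)%R D = joint_kernel_count c D.
Proof.
apply: eq_card => y; rewrite !in_set /=.
under eq_bigr do rewrite mulrBl.
rewrite sumrB -mulr_sumr.
by case: (eqVneq (\sum_t y t)%R 0%R) => [-> | _]; rewrite ?mulr0 ?subr0 ?andbF.
Qed.

(* Subtracting v times the sum form kills the coefficients on the class of v;
   summing over that class then counts vectors with a prescribed sum. *)
Lemma joint_kernel_count_rec D c v :
  ((joint_kernel_count c D)%:Z =
   (phi F #|[set t in D | c t == v]| * psi F #|[set t in D | c t != v]|)%:Z +
   (-1) ^+ #|[set t in D | c t == v]| * (joint_kernel_count c [set t in D | c t != v])%:Z)%R.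
Proof.
set G := [set t in D | c t == v]; set D' := [set t in D | c t != v].
have sep : joint_kernel_count c D + phi F #|G| * joint_kernel_count c D' =
           phi F #|G| * psi F #|D'| + psi F #|G| * joint_kernel_count c D'.
  pose c' t := (c t - v)%R.
  have c'D' : {in D', forall t, c' t != 0%R} by move=> t; rewrite inE /c' subr_eq0 => /andP[].
  have c'G : {in G, forall t, c' t = 0%R}.
    by move=> t; rewrite inE /c' => /andP[_ /eqP ->]; rewrite subrr.
  rewrite -(joint_kernel_count_shift D c v) -(joint_kernel_count_shift D' c v).
  rewrite -(kernel_count_nz c'D').
  rewrite /joint_kernel_count /kernel_count -/G; set nG := #|G|.
  rewrite [X in X + _ = _]card_in_sum (big_pffun_on_sep D _ (fun t => c t == v)) exchange_big /=.
  rewrite !card_in_sum !big_distrr -!big_split /=; apply: eq_bigr => y Hy.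
  under eq_bigr => z Hz do
    rewrite sum_mul_ffunD (sum_mul_pffun_on_eq0 c'G Hz) add0r sum_ffunD addr_eq0.
  rewrite /c'; case: (_ == 0%R); last by rewrite big1 ?muln0.
  rewrite -card_in_sum -/(nzsum_count G _) nzsum_count_card oppr_eq0.
  by case: (_ == 0%R); rewrite ?muln0 ?muln1 ?addn0 ?add0n // addnC.
have /(congr1 Posz) := sep; rewrite !PoszD !PoszM => sepZ.
by rewrite -psi_sub_phi mulrBl addrA -sepZ addrK.
Qed.

Lemma joint_kernel_count_set0 c : joint_kernel_count c set0 = 1.
Proof.
rewrite -(cards1 (0%R : {ffun T -> F})); apply: eq_card => y; rewrite !inE.
apply/andP/eqP => [[/pffun_on0P Hy _] | ->].
  by apply/ffunP => t; have := Hy t; rewrite inE ffunE => /eqP.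
split; first by apply/pffun_on0P => t; rewrite ffunE inE.
by rewrite !big1 ?eqxx // => t _; rewrite ffunE ?mulr0.
Qed.

Lemma joint_kernel_count_Arev D c (vs : seq F) : uniq vs -> vs != [::] ->
  {in D, forall t, c t \in vs} ->
  ((joint_kernel_count c D)%:Z = Arev F [seq #|[set t in D | c t == v]| | v <- vs])%R.
Proof.
elim: vs D => // v vs IH D /andP[vNvs uvs] _ cD.
rewrite (joint_kernel_count_rec D c v).
set G := [set t in D | c t == v]; set D' := [set t in D | c t != v].
have cD' : {in D', forall t, c t \in vs}.
  by move=> t; rewrite inE => /andP[/cD]; rewrite inE => /orP[/eqP -> | //]; rewrite eqxx.
have fibresD' : {in vs, forall u, [set t in D' | c t == u] = [set t in D | c t == u]}.
  move=> u uvs'; apply/setP => t; rewrite !inE.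
  case: (c t =P u) => [-> | _]; last by rewrite !andbF.
  by rewrite andbT; case: eqP vNvs => [<- /negP[] // | _ _]; rewrite andbT.
case: vs IH uvs cD fibresD' cD' vNvs => [_ _ _ _ cD' _ | u vs IH uvs _ fibresD' cD' _].
  have -> : D' = set0 by apply/setP => t; rewrite in_set0; apply/negbTE/negP => /cD'.
  by rewrite joint_kernel_count_set0 cards0 psi0 muln1 -psi_sub_phi mulr1 addrC subrK.
have fibres : [seq #|[set t in D' | c t == w]| | w <- u :: vs] =
              [seq #|[set t in D | c t == w]| | w <- u :: vs].
  by apply/eq_in_map => w /fibresD' ->.
rewrite IH // fibres [in RHS]map_cons [in RHS]Arev_cons // -fibres.
by rewrite sumn_card_fibres // PoszM mulrC.
Qed.

Lemma card_kernel_sum_prod_neq0 D c : {in ~: D, forall t, c t = 0%R} ->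
  #|[set x : {ffun T -> F} |
      (\sum_t c t * x t == 0)%R && ((\sum_(t in D) x t) * \prod_(t in D) x t != 0)%R]|
    + #|F| ^ #|~: D| * joint_kernel_count c D =
  #|F| ^ #|~: D| * kernel_count c D.
Proof.
move=> cD; rewrite card_set_sum (sum_ffun_dep_on (D := D)) => [|y z Hz]; last first.
  rewrite sum_mul_ffunD (sum_mul_pffun_on_eq0 cD Hz) addr0.
  have yzD : {in D, forall t, (y + z)%R t = y t}.
    by move=> t tD; rewrite ffunE (pffun_on0_out Hz) ?addr0 // inE negbK.
  by rewrite (eq_bigr _ yzD) (eq_bigr _ yzD).
rewrite -mulnDr; congr (_ * _).
have nz_vec y : y \in nzvec_on D -> y \in vec_on D.
  by move=> /pffun_on0P Hy; apply/pffun_on0P => t; have := Hy t; case: (t \in D).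
rewrite -[X in X + _ = _]card_in_sum /joint_kernel_count /kernel_count.
rewrite (@eq_card _ _ [set y in nzvec_on D | (\sum_t c t * y t == 0)%R && (\sum_t y t != 0)%R]);
  last first.
  move=> y; rewrite !in_set; case: (boolP (y \in vec_on D)) => Hy; last first.
    by rewrite (negbTE (contra (nz_vec y) Hy)).
  rewrite mulf_eq0 negb_or (nzvec_on_prod Hy) -(sum_pffun_on (g := fun _ a => a) _ Hy) //.
  by case: (_ == 0%R); case: (_ == 0%R); case: (_ == 0%R).
rewrite !card_in_sum -big_split; apply: eq_bigr => y _.
by case: (_ == 0%R); case: (_ == 0%R).
Qed.

Lemma card_kernel_sum_prod_eq0 D c t0 : c t0 != 0%R -> {in ~: D, forall t, c t = 0%R} ->
  #|[set x : {ffun T -> F} |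
      (\sum_t c t * x t == 0)%R && ((\sum_(t in D) x t) * \prod_(t in D) x t == 0)%R]|
    + #|F|.-1 ^ #|[set t in D | c t == 0%R]| * #|F| ^ #|~: D| * psi F #|[set t in D | c t != 0%R]|
  = #|F| ^ #|T|.-1 + #|F| ^ #|~: D| * joint_kernel_count c D.
Proof.
move=> ct0 cD; rewrite -(card_hyperplane 0%R ct0).
rewrite mulnAC mulnC [_ ^ _ * psi _ _]mulnC -kernel_countE -(card_kernel_sum_prod_neq0 cD).
rewrite addnA; congr (_ + _); rewrite !card_set_sum -big_split; apply: eq_bigr => x _.
by case: (_ == 0%R); case: (_ == 0%R).
Qed.

End Kernels.

Lemma A0_Arev rs e : rs != [::] -> A0 F rs e = Arev F (e :: rev rs).
Proof.
move=> rs_nz; rewrite /A0 /A; case: eqP => [-> | _]; last by rewrite cats1 rev_rcons.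
rewrite cats0 Arev_cons; first by rewrite phi0 mulr0 add0r expr0 mul1r.
by rewrite -size_eq0 size_rev size_eq0.
Qed.

Lemma joint_kernel_count_A0 (T : finType) (D : {set T}) (c : T -> F) (bs : seq F) :
  uniq (0%R :: bs) -> bs != [::] -> {in D, forall t, c t \in 0%R :: bs} ->
  ((joint_kernel_count c D)%:Z =
   A0 F [seq #|[set t in D | c t == v]| | v <- bs] #|[set t in D | c t == 0%R]|)%R.
Proof.
move=> ubs bs_nz cD; rewrite A0_Arev ?map_rev; last by rewrite -size_eq0 size_map size_eq0.
rewrite (joint_kernel_count_Arev (vs := 0%R :: rev bs)) ?map_cons ?map_rev //.
  by rewrite /= rev_uniq mem_rev.
by move=> t /cD; rewrite !inE mem_rev.
Qed.

Section Pushforward.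
Variables (S T : finType) (e : S -> T) (a : S -> F).

Definition pushforward u := (\sum_(t | e t == u) a t)%R.

Lemma pushforward_sum (x : T -> F) : (\sum_t a t * x (e t) = \sum_u pushforward u * x u)%R.
Proof.
rewrite (partition_big e xpredT) //=; apply: eq_bigr => u _.
by rewrite mulr_suml; apply: eq_bigr => t /eqP <-.
Qed.

Lemma pushforward_out u : u \notin codom e -> pushforward u = 0%R.
Proof. by move=> uNe; apply: big1 => t /eqP etu; rewrite -etu codom_f in uNe. Qed.

Hypothesis e_inj : injective e.

Lemma pushforward_e t : pushforward (e t) = a t.
Proof. by rewrite /pushforward (big_pred1 t) // => t'; rewrite /= (inj_eq e_inj). Qed.

Lemma card_pushforward_fibre (D : {set T}) v : codom e \subset D -> v != 0%R ->
  #|[set u in D | pushforward u == v]| = #|[set t | a t == v]|.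
Proof.
move=> eD v0; rewrite -(card_imset _ e_inj); apply: eq_card => u; rewrite !inE.
apply/andP/imsetP => [[uD /eqP pu] | [t]].
  have /codomP [t ut] : u \in codom e by apply: contraR v0 => /pushforward_out; rewrite pu => ->.
  by exists t; rewrite // inE -pushforward_e -ut pu.
by rewrite inE => /eqP <- ->; rewrite pushforward_e (subsetP eD) ?codom_f.
Qed.

End Pushforward.

End Counting.

(** * The diagonal form of the proposition *)

Lemma widen_ord_inj n m (le_nm : n <= m) : injective (widen_ord le_nm).
Proof. by move=> j1 j2 /(congr1 val) /= /ord_inj. Qed.

Lemma card_setC_widen n m (le_nm : n <= m) :
  #|~: [set widen_ord le_nm j | j : 'I_n]| = m - n.
Proof.
by rewrite -[m in RHS]card_ord -(cardsC [set widen_ord le_nm j | j : 'I_n]) card_imset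
  ?card_ord ?addKn //; apply: widen_ord_inj.
Qed.

Section DiagonalForm.
Variables (F : finFieldType) (h k s l : nat) (hk : h <= k) (hl : 0 < l).
Variables (i : 'I_s -> 'I_h) (a : 'I_s -> F) (b : 'I_l -> F) (r : 'I_l -> nat).
Hypotheses (i_inj : injective i) (a_nz : forall t, a t != 0%R) (b_inj : injective b).
Hypotheses (r_pos : forall j, 0 < r j) (a_in_b : forall t, exists j, a t = b j).
Hypothesis r_card : forall j, #|[set t | a t == b j]| = r j.

Let e t := widen_ord hk (i t).
Local Notation D := [set widen_ord hk j | j : 'I_h].
Local Notation c := (pushforward e a).
Local Notation bs := [seq b j | j <- enum 'I_l].

Lemma index_inj : injective e.
Proof. by move=> t1 t2 /widen_ord_inj /i_inj. Qed.

Lemma codom_index_sub : codom e \subset D.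
Proof. by apply/subsetP => _ /codomP[t ->]; apply: imset_f. Qed.

Lemma coef_out : {in ~: D, forall u, c u = 0%R}.
Proof.
move=> u; rewrite inE => uD; apply: pushforward_out; apply: contra uD.
exact: (subsetP codom_index_sub).
Qed.

Lemma coef_nz t : c (e t) != 0%R.
Proof. by rewrite (pushforward_e a index_inj). Qed.

Lemma value_nz j : b j != 0%R.
Proof. by have := r_pos j; rewrite -r_card => /card_gt0P[t]; rewrite inE => /eqP <-. Qed.

Lemma coef_vals : {in D, forall u, c u \in 0%R :: bs}.
Proof.
move=> u _; rewrite inE; case: (boolP (u \in codom e)) => [/codomP[t ->] | /pushforward_out ->].
  by rewrite (pushforward_e a index_inj); case: (a_in_b t) => j ->; rewrite map_f ?orbT ?mem_enum.
by rewrite eqxx.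
Qed.

Lemma uniq_coef_vals : uniq (0%R :: bs).
Proof.
rewrite /= map_inj_uniq ?enum_uniq // andbT; apply/mapP => -[j _ /esym/eqP].
by rewrite (negbTE (value_nz j)).
Qed.

Lemma card_coef_nz : #|[set u in D | c u != 0%R]| = s.
Proof.
rewrite -[RHS]card_ord -(card_imset _ index_inj); apply: eq_card => u; rewrite !inE.
apply/andP/imsetP => [[_ cu] | [t _ ->]].
  have /codomP[t ->] : u \in codom e by apply: contraR cu => /pushforward_out ->; rewrite eqxx.
  by exists t.
by rewrite (subsetP codom_index_sub) ?codom_f ?coef_nz.
Qed.

Lemma card_coef_eq0 : #|[set u in D | c u == 0%R]| = h - s.
Proof.
have cardD : #|D| = h by rewrite (card_imset _ (@widen_ord_inj _ _ hk)) card_ord.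
by rewrite -[h in _ = h - _]cardD -(card_sep D (fun u => c u == 0%R)) card_coef_nz addnK.
Qed.

Lemma joint_kernel_count_coef :
  ((joint_kernel_count c D)%:Z = A0 F [seq r j | j <- enum 'I_l] (h - s))%R.
Proof.
rewrite (joint_kernel_count_A0 uniq_coef_vals _ coef_vals) ?card_coef_eq0.
  rewrite -map_comp; congr (A0 _ _ _); apply: eq_map => j /=.
  by rewrite (card_pushforward_fibre a index_inj codom_index_sub (value_nz j)).
by rewrite -size_eq0 size_map size_enum_ord -lt0n.
Qed.

Lemma card_diagonal_solutions :
  #|[set x : {ffun 'I_k -> F} | (\sum_(t < s) a t * x (widen_ord hk (i t)) == 0)%R &&
      ((\sum_(j < h) x (widen_ord hk j)) * \prod_(j < h) x (widen_ord hk j) == 0)%R]| =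
  #|[set x : {ffun 'I_k -> F} | (\sum_u c u * x u == 0)%R &&
      ((\sum_(u in D) x u) * \prod_(u in D) x u == 0)%R]|.
Proof.
apply: eq_card => x; rewrite !inE (pushforward_sum e a x).
by rewrite !(big_imset _ (in2W (@widen_ord_inj _ _ hk))).
Qed.

End DiagonalForm.

Unset Implicit Arguments.
Local Open Scope ring_scope.

Theorem proposition2p4 (F : finFieldType) (h k : nat) (h4 : (4 <= h)%N)
    (hk : (h <= k)%N) (s : nat) (hs1 : (1 <= s)%N) (hsh : (s <= h)%N)
    (i : 'I_s -> 'I_h) (i_inj : injective i) (a : 'I_s -> F)
    (a_nz : forall t, a t != 0)
    (l : nat) (hl : (1 <= l)%N) (b : 'I_l -> F) (b_inj : injective b)
    (r : 'I_l -> nat) (r_pos : forall j, (1 <= r j)%N)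
    (a_in_b : forall t, exists j, a t = b j)
    (r_card : forall j, #|[set t | a t == b j]| = r j) :
  let q := #|F| in
  let x_ (x : {ffun 'I_k -> F}) (j : 'I_h) := x (widen_ord hk j) in
  let Lambda := #|[set x : {ffun 'I_k -> F} |
      (\sum_(t < s) a t * x_ x (i t) == 0) &&
      ((\sum_(j < h) x_ x j) * \prod_(j < h) x_ x j == 0)]| in
  Lambda%:Z = (q ^ (k - 1))%:Z
              - ((q - 1) ^ (h - s) * q ^ (k - h) * psi F s)%:Z
              + (q ^ (k - h))%:Z * A0 F [seq r j | j <- enum 'I_l] (h - s).
Proof.
move=> q x_ Lambda.
have := card_kernel_sum_prod_eq0 (coef_nz hk i_inj a_nz (Ordinal hs1)) (coef_out i a).
rewrite -card_diagonal_solutions (card_coef_eq0 hk i_inj a_nz) (card_coef_nz hk i_inj a_nz).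
rewrite card_setC_widen card_ord !subn1 => /(congr1 Posz).
rewrite !PoszD !PoszM (joint_kernel_count_coef hk hl i_inj a_nz b_inj r_pos a_in_b r_card).
by rewrite addrAC /q => <-; rewrite addrK.
Qed.
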